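(* Let $X=(I,(\cdot,\cdot))$ be a Cartan datum and $\sigma$ an admissible diagram automorphism of $X$ of order $n=am$; put $\tau=\sigma^m$. Let $X^\tau=(I^\tau,(\cdot,\cdot)_\tau)$ be the Cartan datum induced from $(X,\tau)$, let $\underline\sigma$ be the permutation of $I^\tau$ induced by $\sigma$ (an admissible diagram automorphism of $X^\tau$), and let $(\underline I^\tau,(\cdot,\cdot)_2)$ be the Cartan datum induced from $(X^\tau,\underline\sigma)$. Identify $\underline I^\tau$ with the set $\underline I$ of $\sigma$-orbits in $I$ by sending a $\underline\sigma$-orbit $\tilde\eta$ to $\eta=\bigcup_{\gamma\in\tilde\eta}\gamma$. Then under $\alpha_{\tilde\eta}\mapsto\alpha_\eta$ one has $(\alpha_{\tilde\eta},\alpha_{\tilde\eta'})_2=(\alpha_\eta,\alpha_{\eta'})_1$ for all $\tilde\eta,\tilde\eta'$; hence the Cartan datum induced from $(X^\tau,\underline\sigma)$ is isomorphic to the Cartan datum $\underline X=(\underline I,(\cdot,\cdot)_1)$ induced from $(X,\sigma)$.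
   Context: A Cartan datum $X=(I,(\cdot,\cdot))$ is a finite set $I$ with a symmetric bilinear form on $\bigoplus_{i\in I}\mathbb Q\alpha_i$ such that $(\alpha_i,\alpha_j)\in\mathbb Z$, $(\alpha_i,\alpha_i)\in2\mathbb Z_{>0}$, and $2(\alpha_i,\alpha_j)/(\alpha_i,\alpha_i)\in\mathbb Z_{\le0}$ for $i\ne j$. A diagram automorphism is a permutation $\sigma$ of $I$ with $(\alpha_{\sigma(i)},\alpha_{\sigma(j)})=(\alpha_i,\alpha_j)$; it is admissible if $(\alpha_i,\alpha_j)=0$ for all distinct $i,j$ in the same $\sigma$-orbit. For such $\sigma$ with orbit set $\underline I$, the Cartan datum induced from $(X,\sigma)$ is $(\underline I,(\cdot,\cdot)_1)$ with form on $\bigoplus_{\eta\in\underline I}\mathbb Q\alpha_\eta$ given by $(\alpha_\eta,\alpha_\eta)_1=(\alpha_i,\alpha_i)|\eta|$ for any $i\in\eta$, and $(\alpha_\eta,\alpha_{\eta'})_1=\sum_{i\in\eta,j\in\eta'}(\alpha_i,\alpha_j)$ for $\eta\ne\eta'$. Two Cartan data are isomorphic if there is a bijection of index sets carrying one form to the other. *)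

From HB Require Import structures.
From mathcomp Require Import all_boot all_order all_algebra all_fingroup.
Set Implicit Arguments. Unset Strict Implicit. Unset Printing Implicit Defensive.
Import Order.TTheory GRing.Theory Num.Theory.
Local Open Scope ring_scope.

(* A Cartan datum on a finite index set I is given by the values
   c i j = (alpha_i, alpha_j) of the symmetric bilinear form on the
   basis vectors (the form on the Q-span is determined by bilinearity). *)
Definition cartan_datum (I : finType) (c : I -> I -> int) : Prop :=
  (forall i j, c i j = c j i) /\
  (forall i, 0 < c i i /\ (2 %| c i i)%Z) /\
  (forall i j, i != j -> (c i i %| 2 * c i j)%Z /\ 2 * c i j <= 0).

Definition diagram_aut (I : finType) (c : I -> I -> int) (s : {perm I}) : Prop :=
  forall i j, c (s i) (s j) = c i j.

Definition admissible (I : finType) (c : I -> I -> int) (s : {perm I}) : Prop :=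
  diagram_aut c s /\
  (forall i j, i != j -> j \in porbit s i -> c i j = 0).

Definition orbit_type (I : finType) (s : {perm I}) : finType :=
  {O : {set I} | O \in porbits s}.

Definition induced_form (I : finType) (c : I -> I -> int) (s : {perm I})
    (e e' : orbit_type s) : int :=
  if e == e' then
    (if [pick i in val e] is Some i then c i i * (#|val e|)%:Z else 0)
  else \sum_(i in val e) \sum_(j in val e') c i j.
Arguments induced_form {I} c s e e'.

From HB Require Import structures.
From mathcomp Require Import all_boot all_order all_algebra all_fingroup.
Import Order.TTheory GRing.Theory Num.Theory.
Local Open Scope ring_scope.
Set Implicit Arguments. Unset Strict Implicit.

(* Every sigma-orbit is the disjoint union of the tau-orbits it contains, and
   sigma permutes these tau-orbits transitively; so the orbits of the induced
   permutation are exactly the sigma-orbits, and the double sums defining the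
   iterated induced form regroup into the sums defining the induced form of
   (X, sigma).  On the diagonal both sides are (alpha_i, alpha_i) times the
   size of the sigma-orbit of i, which is the size of a tau-orbit times the
   number of tau-orbits it splits into.  Neither the Cartan axioms nor the
   order of sigma play any role. *)

Section Orbits.

Variables (T : finType) (s : {perm T}).
Implicit Types (e : orbit_type s) (x : T).

Lemma porbit_in_porbits x : porbit s x \in porbits s.
Proof. exact: imset_f. Qed.

Definition orbit_of x : orbit_type s := Sub (porbit s x) (porbit_in_porbits x).

Lemma mem_orbit_of x : x \in val (orbit_of x).
Proof. exact: porbit_id. Qed.

Lemma orbit_ofP e : exists x, orbit_of x = e.
Proof. by have /imsetP[x _ ex] := valP e; exists x; apply: val_inj. Qed.

Lemma orbit_of_mem e x : x \in val e -> orbit_of x = e.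
Proof.
have [y <-] := orbit_ofP e => /= xy; apply: val_inj => /=.
by apply/eqP; rewrite eq_porbit_mem.
Qed.

Lemma orbit_type_eq e e' x : x \in val e -> x \in val e' -> e = e'.
Proof. by move=> /orbit_of_mem <- /orbit_of_mem <-. Qed.

Lemma orbit_type_disjoint e e' : e != e' -> [disjoint val e & val e'].
Proof.
move=> ne; rewrite -setI_eq0; apply/set0Pn => -[x /setIP[xe xe']].
by rewrite (orbit_type_eq xe xe') eqxx in ne.
Qed.

Lemma big_bigcup_orbits (R : Type) (idx : R) (op : Monoid.com_law idx)
    (K : {set orbit_type s}) (E : T -> R) :
  \big[op/idx]_(x in \bigcup_(e in K) val e) E x
    = \big[op/idx]_(e in K) \big[op/idx]_(x in val e) E x.
Proof.
have tiK : trivIset (val @: K).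
  apply/trivIsetP => _ _ /imsetP[e _ ->] /imsetP[e' _ ->] ne.
  by apply: orbit_type_disjoint; apply: contraNneq ne => ->.
by rewrite -cover_imset big_trivIset // big_imset //; apply: in2W val_inj.
Qed.

Lemma porbit_expg_sub n x : porbit (s ^+ n)%g x \subset porbit s x.
Proof. by apply/subsetP => y /porbitP[l ->]; rewrite -expgM mem_porbit. Qed.

Lemma porbit_expg_closed n x y : y \in porbit s x -> (s ^+ n)%g y \in porbit s x.
Proof. by case/porbitP => l ->; rewrite -permM -expgD mem_porbit. Qed.

End Orbits.

Section InducedForm.

Variables (T : finType) (c : T -> T -> int) (s : {perm T}).
Hypothesis hc : diagram_aut c s.

Lemma diagram_aut_expg n : diagram_aut c (s ^+ n)%g.
Proof.
elim: n => [|n IH] i j; first by rewrite expg0 !perm1.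
by rewrite expgSr !permM hc IH.
Qed.

Lemma diagram_aut_porbit x y : y \in porbit s x -> c y y = c x x.
Proof. by case/porbitP => n ->; apply: diagram_aut_expg. Qed.

Lemma induced_form_diag (e : orbit_type s) x :
  x \in val e -> induced_form c s e e = c x x * (#|val e|)%:Z.
Proof.
move=> xe; rewrite /induced_form eqxx; case: pickP => [y ye | none].
  by rewrite -(orbit_of_mem xe) in ye; rewrite (diagram_aut_porbit ye).
by have := none x; rewrite xe.
Qed.

End InducedForm.

Lemma induced_form_offdiag (T : finType) (c : T -> T -> int) (s : {perm T})
    (e e' : orbit_type s) :
  e != e' -> induced_form c s e e' = \sum_(i in val e) \sum_(j in val e') c i j.
Proof. by move=> ne; rewrite /induced_form (negbTE ne). Qed.

Section OrbitTower.

Variables (T : finType) (s : {perm T}) (m : nat).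
Local Notation tau := (s ^+ m)%g.
Variable u : {perm orbit_type tau}.
Hypothesis val_u : forall g, val (u g) = s @: val g.
Implicit Types (g : orbit_type tau) (k : orbit_type u).

Lemma val_expu n g : val ((u ^+ n)%g g) = (s ^+ n)%g @: val g.
Proof.
elim: n g => [|n IH] g.
  by rewrite expg0 perm1 -[LHS]imset_id; apply: eq_imset => x; rewrite perm1.
rewrite expgSr permM val_u IH -imset_comp.
by apply: eq_imset => x; rewrite /= expgSr permM.
Qed.

Lemma card_expu n g : #|val ((u ^+ n)%g g)| = #|val g|.
Proof. by rewrite val_expu card_imset //; apply: perm_inj. Qed.

Lemma tau_orbit_sub g x : x \in val g -> val g \subset porbit s x.
Proof. by move=> /orbit_of_mem <-; apply: porbit_expg_sub. Qed.

Lemma bigcup_u_orbit x :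
  \bigcup_(g in porbit u (orbit_of tau x)) val g = porbit s x.
Proof.
apply/setP => y; apply/bigcupP/idP => [[g /porbitP[n ->]] | /porbitP[n ->]].
  rewrite val_expu => /imsetP[z xz ->].
  exact/porbit_expg_closed/(subsetP (porbit_expg_sub s m x)).
exists ((u ^+ n)%g (orbit_of tau x)); first exact: mem_porbit.
by rewrite val_expu imset_f // mem_orbit_of.
Qed.

Lemma bigcup_u_orbit_in_porbits k :
  \bigcup_(g in val k) val g \in porbits s.
Proof.
have [g <-] := orbit_ofP k; have [x <-] := orbit_ofP g.
by rewrite bigcup_u_orbit porbit_in_porbits.
Qed.

Definition orbit_union k : orbit_type s :=
  Sub (\bigcup_(g in val k) val g) (bigcup_u_orbit_in_porbits k).

Lemma val_orbit_union k : val (orbit_union k) = \bigcup_(g in val k) val g.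
Proof. by []. Qed.

Lemma orbit_unionE x : orbit_union (orbit_of u (orbit_of tau x)) = orbit_of s x.
Proof. exact/val_inj/bigcup_u_orbit. Qed.

Lemma orbit_union_inj : injective orbit_union.
Proof.
move=> k k' ekk'; have [g gk] : exists g, g \in val k.
  by have [g <-] := orbit_ofP k; exists g; apply: mem_orbit_of.
have [x xg] : exists x, x \in val g.
  by have [x <-] := orbit_ofP g; exists x; apply: mem_orbit_of.
have : x \in val (orbit_union k') by rewrite -ekk'; apply/bigcupP; exists g.
case/bigcupP => g' g'k' xg'; rewrite -(orbit_type_eq xg xg') in g'k'.
exact: orbit_type_eq gk g'k'.
Qed.

Lemma orbit_union_bij : bijective orbit_union.
Proof.
apply: (inj_card_bij orbit_union_inj); rewrite -(card_codom orbit_union_inj).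
apply/subset_leq_card/subsetP => O _; have [x <-] := orbit_ofP O.
by rewrite -orbit_unionE codom_f.
Qed.

Lemma card_orbit_union k g :
  g \in val k -> #|val (orbit_union k)| = (#|val g| * #|val k|)%N.
Proof.
move=> /orbit_of_mem <-; rewrite -sum1_card big_bigcup_orbits mulnC -sum_nat_const.
by apply: eq_bigr => _ /porbitP[n ->]; rewrite sum1_card card_expu.
Qed.

Variable c : T -> T -> int.
Hypothesis hc : diagram_aut c s.

Lemma induced_form_u_aut : diagram_aut (induced_form c tau) u.
Proof.
move=> g g'; have [-> | ne] := eqVneq g g'.
  have [x <-] := orbit_ofP g'.
  have sx : s x \in val (u (orbit_of tau x)) by rewrite val_u imset_f ?mem_orbit_of.
  rewrite (induced_form_diag (diagram_aut_expg hc m) sx) hc.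
  by rewrite (induced_form_diag (diagram_aut_expg hc m) (mem_orbit_of _ x)) val_u
    card_imset //; apply: perm_inj.
rewrite !induced_form_offdiag ?(inj_eq perm_inj) // !val_u big_imset /=.
  apply: eq_bigr => i _; rewrite big_imset /=; last exact: in2W perm_inj.
  by apply: eq_bigr => j _; rewrite hc.
exact: in2W perm_inj.
Qed.

Lemma admissible_induced_form :
  (forall i j, i != j -> j \in porbit s i -> c i j = 0) ->
  admissible (induced_form c tau) u.
Proof.
move=> c_orbit0; split; first exact: induced_form_u_aut.
move=> g g' ne /porbitP[n eg']; rewrite induced_form_offdiag // eg' val_expu.
apply: big1 => i ig; rewrite big_imset /=; last exact: in2W perm_inj.
apply: big1 => j jg; apply: c_orbit0.
  apply: contraNneq ne => ij; apply/eqP/(orbit_type_eq ig).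
  by rewrite eg' val_expu ij imset_f.
exact/porbit_expg_closed/(subsetP (tau_orbit_sub ig)).
Qed.

Lemma induced_form_orbit_union k k' :
  induced_form (induced_form c tau) u k k'
    = induced_form c s (orbit_union k) (orbit_union k').
Proof.
have [<- | ne] := eqVneq k k'.
  have [g <-] := orbit_ofP k; have [x <-] := orbit_ofP g.
  have xU : x \in val (orbit_union (orbit_of u (orbit_of tau x))).
    by rewrite orbit_unionE mem_orbit_of.
  rewrite (induced_form_diag induced_form_u_aut (mem_orbit_of _ _)).
  rewrite (induced_form_diag (diagram_aut_expg hc m) (mem_orbit_of _ _)).
  by rewrite (induced_form_diag hc xU) (card_orbit_union (mem_orbit_of _ _))
    PoszM mulrA.
rewrite !induced_form_offdiag ?(inj_eq orbit_union_inj) // !val_orbit_union.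
rewrite big_bigcup_orbits.
apply: eq_bigr => g gk.
under eq_bigr do rewrite big_bigcup_orbits.
rewrite exchange_big; apply: eq_bigr => g' g'k'.
rewrite induced_form_offdiag //; apply: contraNneq ne => egg'.
by rewrite -egg' in g'k'; apply/eqP/(orbit_type_eq gk).
Qed.

End OrbitTower.

Unset Implicit Arguments.

Theorem lemma2p4 (I : finType) (c : I -> I -> int) (sigma : {perm I})
    (a m : nat)
    (hX : cartan_datum c)
    (hsig : admissible c sigma)
    (hord : #[sigma]%g = (a * m)%N)
    (usig : {perm orbit_type (sigma ^+ m)%g})
    (husig : forall g : orbit_type (sigma ^+ m)%g,
        val (usig g) = sigma @: val g) :
  admissible (induced_form c (sigma ^+ m)%g) usig /\
  exists phi : orbit_type usig -> orbit_type sigma,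
    bijective phi /\
    (forall k, val (phi k) = \bigcup_(g in (val k : {set orbit_type (sigma ^+ m)%g})) (val g : {set I})) /\
    (forall k k', induced_form (induced_form c (sigma ^+ m)%g) usig k k'
                  = induced_form c sigma (phi k) (phi k')).
Proof.
have [hc c_orbit0] := hsig.
split; first exact: admissible_induced_form.
exists (orbit_union husig); split; first exact: orbit_union_bij.
by split=> // k k'; apply: induced_form_orbit_union.
Qed.
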